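(* Let $\mathcal S$ be the set of sentences, $\mathcal I$ the set of interpretations, and $\mathcal B_{\mathcal S}=\{\mathrm{Mod}(\varphi):\varphi\in\mathcal S\}$. Then every finitely additive probability on the algebra $\mathcal B_{\mathcal S}$ is countably additive on $\mathcal B_{\mathcal S}$, i.e. for every countable collection $\{A_i\}$ of pairwise disjoint sets in $\mathcal B_{\mathcal S}$ whose union lies in $\mathcal B_{\mathcal S}$, $\mu^*(\bigcup_iA_i)=\sum_i\mu^*(A_i)$.
   Context: Setting: higher-order logic (Church's simple theory of types, without a description operator), with Henkin semantics: an interpretation consists of domains $D_\alpha$ for each type ($D_o=\{\mathsf T,\mathsf F\}$, $D_{\alpha\to\beta}$ a set of functions $D_\alpha\to D_\beta$) and a valuation of the constants (equality denoting identity) such that every term has a denotation. Sentences are closed terms of type $o$. For a sentence $\varphi$, $\mathrm{Mod}(\varphi)=\{I\in\mathcal I:\varphi\text{ is valid in }I\}$; $\mathcal B_{\mathcal S}$ is closed under complement and finite unions and intersections and contains $\mathcal I$, so it is an algebra of sets. A function $\mu^*:\mathcal B_{\mathcal S}\to\mathbb R$ is a finitely additive probability if $\mu^*(\emptyset)=0$, $\mu^*(\mathcal I)=1$, and $\mu^*(A\cap C)+\mu^*(A\cup C)=\mu^*(A)+\mu^*(C)$ for all $A,C\in\mathcal B_{\mathcal S}$ (and non-negative). *)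

(* Higher-order logic (Church's simple type theory,
   no description operator) with Henkin semantics. *)
From HB Require Import structures.
From mathcomp Require Import all_boot all_order all_algebra.
From mathcomp Require Import all_classical all_reals all_analysis.
Set Implicit Arguments. Unset Strict Implicit. Unset Printing Implicit Defensive.
Import Order.TTheory GRing.Theory Num.Theory.
Local Open Scope classical_set_scope.
Local Open Scope ring_scope.

Inductive ty : Type := To | Ti | Arr (a b : ty).

Section HOL.
Variables (C : Type) (ctyp : C -> ty).

Inductive var : list ty -> ty -> Type :=
| VZ (G : list ty) (t : ty) : var (t :: G) t
| VS (G : list ty) (t s : ty) : var G t -> var (s :: G) t.

Inductive tm (G : list ty) : ty -> Type :=
| Var (t : ty) : var G t -> tm G t
| Cst (c : C) : tm G (ctyp c)
| EqC (a : ty) : tm G (Arr a (Arr a To))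
| NegC : tm G (Arr To To)
| OrC : tm G (Arr To (Arr To To))
| PiC (a : ty) : tm G (Arr (Arr a To) To)
| App (a b : ty) : tm G (Arr a b) -> tm G a -> tm G b
| Lam (a b : ty) : tm (a :: G) b -> tm G (Arr a b).

Definition sentence := tm nil To.

Fixpoint dom (Di : Type) (Df : ty -> ty -> Type) (t : ty) : Type :=
  match t with To => bool | Ti => Di | Arr a b => Df a b end.

Fixpoint env (Di : Type) (Df : ty -> ty -> Type) (G : list ty) : Type :=
  match G with nil => unit | t :: G' => (dom Di Df t * env Di Df G')%type end.

Fixpoint lookup (Di : Type) (Df : ty -> ty -> Type) (G : list ty) (t : ty)
  (v : var G t) : env Di Df G -> dom Di Df t :=
  match v in var G t return env Di Df G -> dom Di Df t with
  | VZ _ _ => fun rho => fst rho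
  | VS _ _ _ v' => fun rho => lookup v' (snd rho)
  end.

(* A Henkin interpretation: nonempty domain of individuals; each D_(a->b)
   is (via the extensional application [app]) a set of functions D_a -> D_b;
   a valuation of the constants; logical constants (equality, negation,
   disjunction, Pi) have their standard meaning; and every term has a
   denotation [den] satisfying the usual clauses. *)
Record interp : Type := Interp {
  Di : Type;
  Di_nonempty : inhabited Di;
  Df : ty -> ty -> Type;
  app : forall a b : ty, Df a b -> dom Di Df a -> dom Di Df b;
  app_ext : forall (a b : ty) (f g : Df a b),
      (forall x, app f x = app g x) -> f = g;
  cval : forall c : C, dom Di Df (ctyp c);
  den : forall (G : list ty) (t : ty), tm G t -> env Di Df G -> dom Di Df t;
  den_var : forall G t (v : var G t) rho, den (Var v) rho = lookup v rho;
  den_cst : forall G (c : C) rho, den (Cst G c) rho = cval c;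
  den_eq : forall G a rho (x y : dom Di Df a),
      app (app (den (EqC G a) rho) x) y = true <-> x = y;
  den_neg : forall G rho (p : bool), app (den (NegC G) rho) p = ~~ p;
  den_or : forall G rho (p q : bool), app (app (den (OrC G) rho) p) q = p || q;
  den_pi : forall G a rho (f : Df a To),
      app (den (PiC G a) rho) f = true <-> (forall x, app f x = true);
  den_app : forall G a b (f : tm G (Arr a b)) (u : tm G a) rho,
      den (App f u) rho = app (den f rho) (den u rho);
  den_lam : forall G a b (s : tm (a :: G) b) rho (x : dom Di Df a),
      app (den (Lam s) rho) x = den s (x, rho)
}.

Definition valid (I : interp) (phi : sentence) : Prop := @den I nil To phi tt = true.
Definition Mod (phi : sentence) : set interp := [set I | valid I phi].

Definition BS : set (set interp) := [set A | exists phi : sentence, A = Mod phi].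

Definition fin_add_prob (R : realType) (mu : set interp -> R) : Prop :=
  [/\ mu set0 = 0, mu setT = 1,
      (forall A, BS A -> 0 <= mu A) &
      (forall A B, BS A -> BS B -> mu (A `&` B) + mu (A `|` B) = mu A + mu B)].

End HOL.

From HB Require Import structures.
From mathcomp Require Import all_boot all_order all_algebra.
From mathcomp Require Import all_classical all_reals all_analysis.
Import Order.TTheory GRing.Theory Num.Theory numFieldNormedType.Exports.
Local Open Scope classical_set_scope.
Local Open Scope ring_scope.
Set Implicit Arguments. Unset Strict Implicit.

(* Compactness reduces countable additivity to finite additivity: if pairwise
   disjoint model classes cover a model class, only finitely many of them are
   nonempty, so the partial sums are eventually constant.  Otherwise pick models
   [J_n] of [A i_n] with [i_n >= n]; their ultraproduct along a nonprincipal
   ultrafilter lies in the cover (Łoś), hence in some [A j], hence almost every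
   [J_n] lies in [A j], which contradicts disjointness as soon as [i_n > j].
   With Henkin semantics the ultraproduct interprets every term componentwise;
   the ultrafilter and choice are needed only for the clauses of the quantifier
   and of extensionality. *)

Lemma dom_inhabited (C : Type) (ctyp : C -> ty) (J : interp ctyp) (t : ty) :
  inhabited (dom (Di J) (Df J) t).
Proof.
elim: t => [| |a _ b [y]].
- exact: (inhabits true).
- exact: Di_nonempty.
- exact: (inhabits (@den _ _ J (b :: nil) (Arr a b)
    (Lam (Var ctyp (VS a (VZ nil b)))) (y, tt))).
Qed.

Section Ultraproduct.
Variables (C : Type) (ctyp : C -> ty) (K : Type) (F : set_system K).
Context {FU : UltraFilter F}.
Variable I : K -> interp ctyp.

Lemma ultra_iff (A B : set K) : (F A <-> F B) -> F [set k | A k <-> B k].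
Proof.
move=> AB; have [FA|FnA] := in_ultra_setVsetC A FU.
  by apply: filterS (filterI FA (AB.1 FA)) => k [Ak Bk].
have FnB : F (~` B).
  have [FB|//] := in_ultra_setVsetC B FU.
  exfalso; apply: (filter_not_empty F).
  by apply: filterS (filterI (AB.2 FB) FnA) => k [].
by apply: filterS (filterI FnA FnB) => k [nAk nBk]; split=> [/nAk|/nBk].
Qed.

Definition agree (X : K -> Type) (s s' : forall k, X k) := F [set k | s k = s' k].

Lemma agree_pointwise X (s s' : forall k, X k) : (forall k, s k = s' k) -> agree s s'.
Proof. by move=> e; apply: filterS filterT => k _; exact: e. Qed.

Lemma agree_sym X (s s' : forall k, X k) : agree s s' -> agree s' s.
Proof. by apply: filterS => k /= ->. Qed.

Lemma agree_trans X (s1 s2 s3 : forall k, X k) :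
  agree s1 s2 -> agree s2 s3 -> agree s1 s3.
Proof. by move=> h1 h2; apply: filterS (filterI h1 h2) => k /= [-> ->]. Qed.

Lemma agree_map (X Y : K -> Type) (f : forall k, X k -> Y k) (s s' : forall k, X k) :
  agree s s' -> agree (fun k => f k (s k)) (fun k => f k (s' k)).
Proof. by apply: filterS => k /= ->. Qed.

(* The ultraproduct of [X] along [F], without quotient types: the class of [s]
   is the predicate [agree s]. *)
Definition uquot (X : K -> Type) :=
  {P : (forall k, X k) -> Prop | exists s, P = agree s}.
Definition uclass X (s : forall k, X k) : uquot X := exist _ (agree s) (ex_intro _ s erefl).
Definition urepr X (q : uquot X) : forall k, X k := projT1 (cid (proj2_sig q)).

Lemma ureprK X (q : uquot X) : uclass (urepr q) = q.
Proof.
by case: q => P hP; rewrite /urepr /=; case: (cid hP) => s /= e; exact: eq_exist.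
Qed.

Lemma uclass_eqP X (s s' : forall k, X k) : uclass s = uclass s' <-> agree s s'.
Proof.
split=> [/(congr1 (@proj1_sig _ _)) /= e|h].
  by rewrite e; exact: agree_pointwise.
apply: eq_exist; apply/funext => s1; apply/propext.
by split; [exact: agree_trans (agree_sym h)|exact: agree_trans h].
Qed.

Notation domk k t := (dom (Di (I k)) (Df (I k)) t).
Definition UDi := uquot (fun k => Di (I k)).
Definition UDf a b := uquot (fun k => Df (I k) a b).
Notation udom t := (dom UDi UDf t).

Definition ulim (t : ty) : (forall k, domk k t) -> udom t :=
  match t as t0 return (forall k, domk k t0) -> udom t0 with
  | To => fun s => `[< F [set k | s k] >]
  | Ti => fun s => uclass s
  | Arr a b => fun s => uclass s
  end.

Definition ucomp (t : ty) : udom t -> forall k, domk k t :=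
  match t as t0 return udom t0 -> forall k, domk k t0 with
  | To => fun p _ => p
  | Ti => fun q => urepr q
  | Arr a b => fun q => urepr q
  end.

Lemma ulim_boolE (s : forall k, bool) : ulim (t := To) s = true <-> F [set k | s k].
Proof. by split=> /asboolP. Qed.

Lemma ucompK t (x : udom t) : ulim (ucomp x) = x.
Proof.
case: t x => [p||a b q] /=; try exact: ureprK.
case: p; apply/asboolP => /=; first exact: (filterS (fun k _ => erefl) filterT).
by move=> h; apply: (filter_not_empty F); apply: filterS h => k.
Qed.

Lemma ulim_eqP t (s s' : forall k, domk k t) : ulim s = ulim s' <-> agree s s'.
Proof.
case: t s s' => [s s'||a b s s'] /=; try exact: uclass_eqP.
split=> [e|h]; last first.
  apply/asboolP/asboolP => [Fs|Fs'].
    by apply: filterS (filterI h Fs) => k /= [->].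
  by apply: filterS (filterI h Fs') => k /= [<-].
have Fss' : F [set k | s k] <-> F [set k | s' k].
  by split=> /asboolP; [rewrite e|rewrite -e] => /asboolP.
by apply: filterS (ultra_iff Fss') => k /= [ss' s's]; apply/idP/idP.
Qed.

Lemma ucomp_eqP t (x y : udom t) : x = y <-> agree (ucomp x) (ucomp y).
Proof. by rewrite -ulim_eqP !ucompK. Qed.

Lemma agree_ucomp_ulim t (s : forall k, domk k t) : agree (ucomp (ulim s)) s.
Proof. by apply/ulim_eqP; rewrite ucompK. Qed.

(* Łoś's step for the universal quantifier: a choice of counterexamples in
   the components is a single element of the ultraproduct. *)
Lemma ultra_forall a (P : forall k, domk k a -> Prop) :
  (forall x : udom a, F [set k | P k (ucomp x k)]) -> F [set k | forall y, P k y].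
Proof.
move=> hP; have [//|nP] := in_ultra_setVsetC [set k | forall y, P k y] FU.
have w k : exists y, ~ (forall z, P k z) -> ~ P k y.
  have [/existsNP [z hz]|allP] := pselect (~ forall z, P k z); first by exists z.
  by case: (dom_inhabited (I k) a) => y; exists y => /allP.
pose xs k := projT1 (cid (w k)).
have hxs k : ~ (forall z, P k z) -> ~ P k (xs k) := projT2 (cid (w k)).
exfalso; apply: (filter_not_empty F).
apply: filterS (filterI nP (filterI (hP (ulim xs)) (agree_ucomp_ulim xs))).
by move=> k [nPk [Pk e]]; apply: (hxs k nPk); rewrite -e.
Qed.

Fixpoint uenv_comp (G : list ty) : env UDi UDf G -> forall k, env (Di (I k)) (Df (I k)) G :=
  match G as G0 return env UDi UDf G0 -> forall k, env (Di (I k)) (Df (I k)) G0 with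
  | nil => fun _ _ => tt
  | t :: G' => fun rho k => (ucomp rho.1 k, uenv_comp rho.2 k)
  end.

Lemma lookup_uenv_comp G t (v : var G t) rho k :
  lookup v (uenv_comp rho k) = ucomp (lookup v rho) k.
Proof. by elim: v rho => [G' t'|G' t' s v IH] rho //=. Qed.

Definition uapp a b (f : UDf a b) (x : udom a) : udom b :=
  ulim (fun k => app (urepr f k) (ucomp x k)).

Definition ucval (c : C) : udom (ctyp c) := ulim (fun k => cval (I k) c).

Definition uden G t (s : tm ctyp G t) (rho : env UDi UDf G) : udom t :=
  ulim (fun k => den s (uenv_comp rho k)).

Lemma uapp_ulim a b (s : forall k, Df (I k) a b) x :
  uapp (ulim (t := Arr a b) s) x = ulim (fun k => app (s k) (ucomp x k)).
Proof.
apply/ulim_eqP.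
exact: (agree_map (fun k (f : Df (I k) a b) => app f (ucomp x k))
  (agree_ucomp_ulim (t := Arr a b) s)).
Qed.

Lemma uden_var G t (v : var G t) rho : uden (Var ctyp v) rho = lookup v rho.
Proof.
rewrite -[RHS]ucompK; apply/ulim_eqP/agree_pointwise => k.
by rewrite den_var lookup_uenv_comp.
Qed.

Lemma uden_cst G (c : C) rho : uden (Cst ctyp G c) rho = ucval c.
Proof. by apply/ulim_eqP/agree_pointwise => k; rewrite den_cst. Qed.

Lemma uden_app G a b (f : tm ctyp G (Arr a b)) (u : tm ctyp G a) rho :
  uden (App f u) rho = uapp (uden f rho) (uden u rho).
Proof.
rewrite /uden uapp_ulim; apply/ulim_eqP.
apply: agree_trans (agree_map (fun k x => app (den f (uenv_comp rho k)) x)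
  (agree_sym (agree_ucomp_ulim (fun k => den u (uenv_comp rho k))))).
by apply: agree_pointwise => k; rewrite den_app.
Qed.

Lemma uden_lam G a b (s : tm ctyp (a :: G) b) rho (x : udom a) :
  uapp (uden (Lam s) rho) x = uden s (x, rho).
Proof.
by rewrite /uden uapp_ulim; apply/ulim_eqP/agree_pointwise => k; rewrite den_lam.
Qed.

Lemma uden_neg G rho (p : bool) : uapp (uden (NegC ctyp G) rho) p = ~~ p.
Proof.
rewrite /uden uapp_ulim -[RHS](ucompK (t := To)).
by apply/ulim_eqP/agree_pointwise => k; rewrite den_neg.
Qed.

Lemma uden_or G rho (p q : bool) : uapp (uapp (uden (OrC ctyp G) rho) p) q = p || q.
Proof.
rewrite /uden !uapp_ulim -[RHS](ucompK (t := To)).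
by apply/ulim_eqP/agree_pointwise => k; rewrite den_or.
Qed.

Lemma uden_eq G a rho (x y : udom a) :
  uapp (uapp (uden (EqC ctyp G a) rho) x) y = true <-> x = y.
Proof.
rewrite /uden !uapp_ulim ulim_boolE ucomp_eqP /agree.
by rewrite (eq_set (fun k => propext (den_eq _ _ _))).
Qed.

Lemma uden_pi G a rho (f : UDf a To) :
  uapp (uden (PiC ctyp G a) rho) f = true <-> (forall x, uapp f x = true).
Proof.
rewrite /uden uapp_ulim ulim_boolE (eq_set (fun k => propext (den_pi _ _))).
split=> [Ff x|h]; first by apply/ulim_boolE; apply: filterS Ff => k; exact.
by apply: ultra_forall => x; apply/ulim_boolE; exact: h.
Qed.

Lemma uapp_ext a b (f g : UDf a b) : (forall x, uapp f x = uapp g x) -> f = g.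
Proof.
move=> h; rewrite -(ureprK f) -(ureprK g); apply/uclass_eqP.
apply: filterS (ultra_forall (P := fun k y => app (urepr f k) y = app (urepr g k) y) _).
  by move=> k /app_ext.
by move=> x; apply/ulim_eqP; exact: h.
Qed.

Lemma UDi_inhabited : inhabited UDi.
Proof. exact: inhabits (uclass (fun k => inhabited_witness (Di_nonempty (I k)))). Qed.

Definition ultraproduct : interp ctyp :=
  @Interp C ctyp UDi UDi_inhabited UDf uapp uapp_ext ucval uden
    uden_var uden_cst uden_eq uden_neg uden_or uden_pi uden_app uden_lam.

Lemma valid_ultraproduct (phi : sentence ctyp) :
  valid ultraproduct phi <-> F [set k | valid (I k) phi].
Proof. exact: ulim_boolE. Qed.

End Ultraproduct.

Section ModelClasses.
Variables (C : Type) (ctyp : C -> ty).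

Lemma BS_set0 : BS (@set0 (interp ctyp)).
Proof.
exists (App (PiC ctyp nil To) (Lam (Var ctyp (VZ nil To)))).
apply/seteqP; split=> // J; rewrite /Mod /valid /= den_app => /den_pi /(_ false).
by rewrite den_lam den_var.
Qed.

Lemma BS_setU (X Y : set (interp ctyp)) : BS X -> BS Y -> BS (X `|` Y).
Proof.
move=> [phi ->] [psi ->]; exists (App (App (OrC ctyp nil) phi) psi).
apply/seteqP; split=> J; rewrite /Mod /valid /= !den_app den_or.
  by case=> ->; rewrite ?orbT.
by case/orP; [left|right].
Qed.

Lemma BS_bigsetU (A : nat -> set (interp ctyp)) n :
  (forall i, BS (A i)) -> BS (\big[setU/set0]_(i < n) A i).
Proof. by move=> BSA; apply: big_ind => //; [exact: BS_set0|exact: BS_setU]. Qed.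

Lemma disjoint_BS_cover_eventually_set0 (A : nat -> set (interp ctyp)) :
  (forall i, BS (A i)) -> (forall i j, i <> j -> A i `&` A j = set0) ->
  BS (\bigcup_i A i) -> exists N, forall i, (N <= i)%N -> A i = set0.
Proof.
move=> BSA disjA [phi ephi]; apply: contrapT => noN.
have w n : exists iJ : nat * interp ctyp, (n <= iJ.1)%N /\ A iJ.1 iJ.2.
  apply: contrapT => nw; apply: noN; exists n => i ni.
  by apply/seteqP; split=> // J AiJ; apply: nw; exists (i, J).
have [p hp] := choice w.
have [G [GU cofinG]] := @ultraFilterLemma nat \oo _.
have /= : (\bigcup_i A i) (ultraproduct (F := G) (fun n => (p n).2)).
  rewrite ephi; apply/valid_ultraproduct; apply: filterS filterT => n _.
  have : (\bigcup_i A i) (p n).2 by exists (p n).1 => //; exact: (hp n).2.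
  by rewrite ephi.
case=> j _ AjJ; have [psi epsi] := BSA j.
have Gj : G [set n | A j (p n).2].
  by move: AjJ; rewrite epsi => /valid_ultraproduct.
have Gjn : G [set n | (j < n)%N] by apply: cofinG; exists j.+1.
apply: (filter_not_empty G); apply: filterS (filterI Gj Gjn).
move=> n [Ajn jn]; have nj : (p n).1 <> j.
  by move=> e; have := (hp n).1; rewrite e leqNgt jn.
suff : (A (p n).1 `&` A j) (p n).2 by rewrite disjA.
by split=> //; exact: (hp n).2.
Qed.

End ModelClasses.

Lemma bigcup_eq_bigsetU (T : Type) (A : nat -> set T) N n :
  (forall i, (N <= i)%N -> A i = set0) -> (N <= n)%N ->
  \bigcup_i A i = \big[setU/set0]_(i < n) A i.
Proof.
move=> AN0 Nn; rewrite (bigcup_splitn n) bigcup0 ?setU0 // => i _.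
by apply: AN0; rewrite (leq_trans Nn) ?leq_addr.
Qed.

Section FiniteAdditivity.
Variables (C : Type) (ctyp : C -> ty) (R : realType) (mu : set (interp ctyp) -> R).
Hypothesis mu_fap : fin_add_prob mu.

Lemma fin_add_probD (X Y : set (interp ctyp)) :
  BS X -> BS Y -> X `&` Y = set0 -> mu (X `|` Y) = mu X + mu Y.
Proof. by case: mu_fap => mu0 _ _ muID BX BY XY0; rewrite -muID // XY0 mu0 add0r. Qed.

Lemma fin_add_prob_bigsetU (A : nat -> set (interp ctyp)) n :
  (forall i, BS (A i)) -> (forall i j, i <> j -> A i `&` A j = set0) ->
  mu (\big[setU/set0]_(i < n) A i) = \sum_(i < n) mu (A i).
Proof.
move=> BSA disjA; elim: n => [|n IHn]; first by rewrite !big_ord0; case: mu_fap.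
rewrite !big_ord_recr /= -IHn fin_add_probD //; first exact: BS_bigsetU.
rewrite -bigcup_mkord; apply/seteqP; split=> // J [[i /= ltin AiJ] AnJ].
have ni : i <> n by move=> ein; rewrite ein ltnn in ltin.
by suff : (A i `&` A n) J by rewrite disjA.
Qed.

End FiniteAdditivity.

Theorem mainTheorem9 (C : Type) (ctyp : C -> ty) (R : realType)
  (mu : set (interp ctyp) -> R) :
  fin_add_prob mu ->
  forall A : nat -> set (interp ctyp),
    (forall i, @BS C ctyp (A i)) ->
    (forall i j, i <> j -> A i `&` A j = set0) ->
    @BS C ctyp (\bigcup_i A i) ->
    (fun n => \sum_(0 <= i < n) mu (A i)) @ \oo --> mu (\bigcup_i A i).
Proof.
move=> mu_fap A BSA disjA BSU.
have [N AN0] := disjoint_BS_cover_eventually_set0 BSA disjA BSU.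
apply: cvg_near_cst; exists N => // n /= Nn.
by rewrite (bigcup_eq_bigsetU AN0 Nn) fin_add_prob_bigsetU // big_mkord.
Qed.
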